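(* Let $R$ be a semiprime ring with identity and $f$ an automorphism of $R$. (a) If $R$ is commutative, then the following are equivalent: (i) $f$ is $X$-inner; (ii) $\mathrm{ann}_R((\mathrm{id}-f)(R))\neq 0$; (iii) there is a nonzero ideal $I$ of $R$ such that $f$ is the identity on $I$. (b) If $R$ is commutative and von Neumann regular, then $f$ is $X$-inner if and only if there exists a nonzero idempotent $e\in R$ such that $f$ is the identity on $eR$. (c) If $R$ is von Neumann regular and $f$ is $X$-inner, then $f$ is corner-inner.
   Context: An automorphism $f$ of a semiprime ring $R$ is $X$-inner if there is a nonzero element $u$ of the left Martindale quotient ring of $R$ with $f(r)u=ur$ for all $r\in R$. An automorphism $f$ of $R$ is corner-inner if there exist a nonzero idempotent $e\in R$ and, setting $e'=f^{-1}(e)$, elements $u\in eRe'$ and $v\in e'Re$ such that (a) $uv=e$ and $vu=e'$; (b) $f(x)=uxv$ for all $x\in e'Re'$; (c) $f^{-1}(y)=vyu$ for all $y\in eRe$. Here $\mathrm{ann}_R(S)=\{x\in R: sx=0 \text{ for all } s\in S\}$. *)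

From mathcomp Require Import all_boot all_algebra.
Set Implicit Arguments. Unset Strict Implicit. Unset Printing Implicit Defensive.
Import GRing.Theory.
Local Open Scope ring_scope.

Definition is_ideal (R : pzRingType) (I : R -> Prop) : Prop :=
  [/\ I 0,
      (forall x y, I x -> I y -> I (x + y)),
      (forall x, I x -> I (- x)),
      (forall r x, I x -> I (r * x)) &
      (forall r x, I x -> I (x * r))].

Definition nonzero_set (R : pzRingType) (S : R -> Prop) : Prop :=
  exists2 x, S x & x != 0.

Definition semiprime (R : pzRingType) : Prop :=
  forall I : R -> Prop, is_ideal I ->
    (forall x y, I x -> I y -> x * y = 0) -> forall x, I x -> x = 0.

Definition commutative_ring (R : pzRingType) : Prop :=
  forall x y : R, x * y = y * x.

Definition von_neumann_regular (R : pzRingType) : Prop :=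
  forall a : R, exists b : R, a * b * a = a.

Definition automorphism (R : pzRingType) (f : {rmorphism R -> R}) : Prop :=
  bijective f.

Definition ann (R : pzRingType) (S : R -> Prop) : R -> Prop :=
  fun x => forall s, S s -> s * x = 0.

(* A dense ideal (the ideals defining the Martindale quotient ring of a
   semiprime ring): a two-sided ideal with zero annihilator. *)
Definition dense_ideal (R : pzRingType) (I : R -> Prop) : Prop :=
  is_ideal I /\ (forall x, ann I x -> x = 0).

(* An element of the left Martindale quotient ring Q of R is (the class of)
   a left R-module map phi : I -> R, with I a dense ideal, written on the
   right (x q := phi x for x in I).  For r in R, x (f(r) q) = phi (x f(r))
   and x (q r) = phi(x) r, and for semiprime R two such maps define the
   same element of Q iff they agree on I.  Hence f is X-inner iff: *)
Definition X_inner (R : pzRingType) (f : R -> R) : Prop :=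
  exists (I : R -> Prop) (phi : R -> R),
    [/\ dense_ideal I,
        (forall x y, I x -> I y -> phi (x + y) = phi x + phi y),
        (forall r x, I x -> phi (r * x) = r * phi x),
        (exists2 x, I x & phi x != 0) &
        (forall r x, I x -> phi (x * f r) = phi x * r)].

(* Corner-inner automorphisms.  Since f is injective, the condition
   f^{-1}(y) = v y u is expressed as f (v y u) = y, and e' = f^{-1}(e)
   as f e' = e. *)
Definition corner_inner (R : pzRingType) (f : R -> R) : Prop :=
  exists e e' u v : R,
    [/\ e * e = e, e != 0 & f e' = e] /\
    [/\ (exists r, u = e * r * e'), (exists r, v = e' * r * e),
        u * v = e & v * u = e'] /\
    (forall x, (exists r, x = e' * r * e') -> f x = u * x * v) /\
    (forall y, (exists r, y = e * r * e) -> f (v * y * u) = y).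

From mathcomp Require Import all_boot all_algebra.
Set Implicit Arguments. Unset Strict Implicit. Unset Printing Implicit Defensive.
Import GRing.Theory.
Local Open Scope ring_scope.

(* In the commutative case an element a of the Martindale quotient ring with
   f(r) a = a r can be pulled back into R: for x in the domain ideal the
   value phi(x) already satisfies f(r) phi(x) = phi(x) r, i.e. it annihilates
   (id - f)(R).  That annihilator is an ideal on which f is the identity,
   because f(x) - x lies in it and squares to zero in a semiprime ring.
   For (c), an idempotent E = b x0 of the domain ideal (von Neumann
   regularity) gives k = phi(E), which intertwines f on the corner pRp,
   p = f^-1(E), with f(x) k = k x.  A reflexive generalised inverse v of k
   inside pRE then yields the idempotents e = k v and e' = v k with
   f(e') = e, and u = k, v implement f between the corners e'Re' and eRe. *)

Definition im_idB (R : pzRingType) (f : R -> R) : R -> Prop :=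
  fun s => exists r, s = r - f r.

Section CommutativeRing.
Variable R : pzRingType.
Hypothesis R_comm : commutative_ring R.

Lemma ann_is_ideal (S : R -> Prop) : is_ideal (ann S).
Proof.
split.
- by move=> s _; rewrite mulr0.
- by move=> x y hx hy s Ss; rewrite mulrDr hx // hy // addr0.
- by move=> x hx s Ss; rewrite mulrN hx // oppr0.
- by move=> r x hx s Ss; rewrite mulrA (R_comm s r) -mulrA hx // mulr0.
- by move=> r x hx s Ss; rewrite mulrA hx // mul0r.
Qed.

Lemma principal_is_ideal (y : R) : is_ideal (fun z => exists t, z = y * t).
Proof.
split.
- by exists 0; rewrite mulr0.
- by move=> _ _ [t1 ->] [t2 ->]; exists (t1 + t2); rewrite mulrDr.
- by move=> _ [t ->]; exists (- t); rewrite mulrN.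
- by move=> r _ [t ->]; exists (r * t); rewrite mulrA (R_comm r y) -mulrA.
- by move=> r _ [t ->]; exists (t * r); rewrite mulrA.
Qed.

Lemma semiprime_sqr_eq0 (y : R) : semiprime R -> y * y = 0 -> y = 0.
Proof.
move=> sp yy; apply: (sp _ (principal_is_ideal y)); last by exists 1; rewrite mulr1.
move=> _ _ [t1 ->] [t2 ->].
by rewrite mulrA -(mulrA y t1 y) (R_comm t1 y) mulrA yy !mul0r.
Qed.

Lemma ann_im_idBP (f : R -> R) (a : R) :
  ann (im_idB f) a <-> forall r, f r * a = a * r.
Proof.
split=> [ha r | ha _ [r ->]].
  have /eqP := ha _ (ex_intro _ r erefl).
  by rewrite mulrBl subr_eq0 -R_comm => /eqP <-.
by rewrite mulrBl ha R_comm subrr.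
Qed.

Lemma intertwiner_of_X_inner (f : R -> R) :
  X_inner f -> exists2 a : R, a != 0 & forall r, f r * a = a * r.
Proof.
move=> [I [phi [_ _ phi_lin [x0 Ix0 phix0_neq0] phi_f]]].
exists (phi x0) => // r.
by rewrite -phi_lin // -R_comm phi_f.
Qed.

End CommutativeRing.

Lemma X_inner_of_intertwiner (R : pzRingType) (f : R -> R) (a : R) :
  a != 0 -> (forall r, f r * a = a * r) -> X_inner f.
Proof.
move=> a_neq0 fa.
exists (fun _ => True), (fun x => x * a); split.
- split; first by split.
  by move=> x hx; rewrite -(mul1r x); apply: hx.
- by move=> x y _ _; rewrite mulrDl.
- by move=> r x _; rewrite mulrA.
- by exists 1; rewrite ?mul1r.
- by move=> r x _; rewrite -mulrA fa mulrA.
Qed.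

Lemma fixed_ideal_ann (R : pzRingType) (f : {rmorphism R -> R}) (a : R) :
  (forall r, f (r * a) = r * a) -> ann (im_idB f) a.
Proof.
move=> fixed _ [r ->].
have fa : f a = a by rewrite -(mul1r a) fixed.
by rewrite mulrBl -{2}fa -rmorphM fixed subrr.
Qed.

Lemma regular_idempotent (R : pzRingType) (a b : R) :
  a * b * a = a -> (b * a) * (b * a) = b * a.
Proof. by move=> aba; rewrite mulrA -(mulrA b a b) -mulrA aba. Qed.

Section CommutativeAutomorphism.
Variables (R : pzRingType) (f : {rmorphism R -> R}).
Hypotheses (R_comm : commutative_ring R) (f_aut : automorphism f).

Lemma X_inner_ann_im_idB : X_inner f <-> nonzero_set (ann (im_idB f)).
Proof.
split=> [/(intertwiner_of_X_inner R_comm) [a a_neq0 fa] | [a ha a_neq0]].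
  by exists a => //; apply/ann_im_idBP.
by apply: (X_inner_of_intertwiner a_neq0); apply/ann_im_idBP.
Qed.

Lemma ann_im_idB_fixed (x : R) :
  semiprime R -> ann (im_idB f) x -> f x = x.
Proof.
move=> sp hx; have [g fK gK] := f_aut.
have hfx : ann (im_idB f) (f x).
  apply/ann_im_idBP => // r; rewrite -[r]gK -!rmorphM.
  by move/(ann_im_idBP R_comm): hx => ->.
have [_ addI oppI _ _] := ann_is_ideal R_comm (im_idB f).
have hy : ann (im_idB f) (x - f x) by apply: addI => //; exact: oppI.
apply/eqP; rewrite eq_sym -subr_eq0; apply/eqP.
by apply: semiprime_sqr_eq0 => //; apply: hy; exists x.
Qed.

Lemma X_inner_fixed_idempotent :
  semiprime R -> von_neumann_regular R ->
  X_inner f <-> exists e : R, [/\ e * e = e, e != 0 & forall r, f (e * r) = e * r].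
Proof.
move=> sp vnr; apply: iff_trans X_inner_ann_im_idB _.
split=> [[a ha a_neq0] | [e [_ e_neq0 fe]]].
  have [b aba] := vnr a.
  have [_ _ _ mulI_l mulI_r] := ann_is_ideal R_comm (im_idB f).
  exists (b * a); split; first exact: regular_idempotent.
    by apply: contraNneq a_neq0 => ba0; rewrite -aba -mulrA ba0 mulr0.
  by move=> r; apply: ann_im_idB_fixed => //; rewrite -mulrA; apply/mulI_l/mulI_r.
by exists e => //; apply: fixed_ideal_ann => r; rewrite (R_comm r e) fe.
Qed.

End CommutativeAutomorphism.

Lemma reflexive_inverse (R : pzRingType) (a c : R) :
  a * c * a = a -> a * (c * a * c) * a = a /\ c * a * c * a * (c * a * c) = c * a * c.
Proof.
move=> aca; split; first by rewrite !mulrA aca aca.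
have acaX x : a * (c * (a * x)) = a * x by rewrite mulrA mulrA aca.
by rewrite -!mulrA !acaX.
Qed.

Lemma regular_corner_inverse (R : pzRingType) (a e e' : R) :
  von_neumann_regular R -> e * e = e -> e' * e' = e' -> e * a = a -> a * e' = a ->
  exists v, [/\ a * v * a = a, v * a * v = v, e' * v = v & v * e = v].
Proof.
move=> vnr ee e'e' ea ae'; have [c aca] := vnr a.
have ac'a : a * (e' * c * e) * a = a by rewrite !mulrA ae' -(mulrA _ e a) ea aca.
have [ava vav] := reflexive_inverse ac'a.
exists (e' * c * e * a * (e' * c * e)); split => //.
  by rewrite !mulrA e'e'.
by rewrite -!mulrA ee.
Qed.

Lemma X_inner_corner_intertwiner (R : pzRingType) (f : {rmorphism R -> R}) :
  automorphism f -> von_neumann_regular R -> X_inner f ->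
  exists p k : R,
    [/\ p * p = p, k != 0, k * p = k & forall r, f (p * r * p) * k = k * (p * r * p)].
Proof.
move=> [g fK gK] vnr [I [phi [[[_ _ _ mulI_l _] _] _ phi_lin [x0 Ix0 phix0] phi_f]]].
have [b x0bx0] := vnr x0.
pose E := b * x0.
have IE : I E by exact: mulI_l.
have EE : E * E = E by exact: regular_idempotent.
have x0E : x0 * E = x0 by rewrite mulrA x0bx0.
clearbody E.
exists (g E), (phi E); split.
- by apply: (can_inj fK); rewrite rmorphM gK EE.
- apply: contraNneq phix0 => phiE0.
  by rewrite -x0E phi_lin // phiE0 mulr0.
- by rewrite -phi_f // gK EE.
- by move=> r; rewrite -phi_f // -phi_lin // !rmorphM gK -!mulrA EE !mulrA EE.
Qed.

Section CornerIntertwiner.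
Variables (R : pzRingType) (f : {rmorphism R -> R}) (p k : R).
Hypotheses (f_aut : automorphism f) (pp : p * p = p) (k_neq0 : k != 0) (kp : k * p = k).
Hypothesis fk : forall r, f (p * r * p) * k = k * (p * r * p).

Lemma intertwiner_fixed_left : f p * k = k.
Proof. by have := fk 1; rewrite mulr1 pp kp. Qed.

Section ReflexiveInverse.
Variable v : R.
Hypotheses (kvk : k * v * k = k) (vkv : v * k * v = v) (pv : p * v = v) (vfp : v * f p = v).

Lemma f_inverse_idempotent : f (v * k) = k * v.
Proof.
have [g fK gK] := f_aut.
have fvk_k : f (v * k) * k = k.
  have vk_corner : p * (v * k) * p = v * k by rewrite mulrA pv -mulrA kp.
  by have := fk (v * k); rewrite vk_corner mulrA kvk.
have kv_corner : p * g (k * v) * p = g (k * v).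
  by apply: (can_inj fK); rewrite !rmorphM gK !mulrA intertwiner_fixed_left -mulrA vfp.
have k_gkv : k * g (k * v) = k.
  by have := fk (g (k * v)); rewrite kv_corner gK kvk => /esym.
have <- : f (v * k) * (k * v) = f (v * k).
  by rewrite -[in LHS](gK (k * v)) -rmorphM -mulrA k_gkv.
by rewrite mulrA fvk_k.
Qed.

Lemma f_on_corner (x : R) : x * (v * k) = x -> p * x * p = x -> f x = k * x * v.
Proof.
move=> x_vk pxp.
by rewrite -{1}x_vk rmorphM f_inverse_idempotent mulrA -pxp fk.
Qed.

Lemma corner_inner_of_inverse : corner_inner f.
Proof.
have kvk' : k * (v * k) = k by rewrite mulrA kvk.
have vkv' : v * (k * v) = v by rewrite mulrA vkv.
exists (k * v), (v * k), k, v; split; [split | split; [split | split]].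
- by rewrite mulrA kvk.
- by apply: contraNneq k_neq0 => kv0; rewrite -kvk kv0 mul0r.
- exact: f_inverse_idempotent.
- by exists k; rewrite !mulrA kvk kvk.
- by exists v; rewrite !mulrA vkv vkv.
- by [].
- by [].
- move=> _ [r ->]; apply: f_on_corner; first by rewrite -!mulrA kvk'.
  by rewrite !mulrA pv -mulrA kp.
- move=> _ [r ->]; set y := k * v * r * (k * v).
  have kvy : k * v * y = y by rewrite /y !mulrA kvk.
  have ykv : y * (k * v) = y by rewrite /y -!mulrA vkv'.
  clearbody y.
  rewrite f_on_corner; first by rewrite !mulrA kvy -mulrA ykv.
    by rewrite -!mulrA kvk'.
  by rewrite !mulrA pv -mulrA kp.
Qed.

End ReflexiveInverse.

Lemma corner_inner_of_intertwiner : von_neumann_regular R -> corner_inner f.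
Proof.
move=> vnr.
have fpfp : f p * f p = f p by rewrite -rmorphM pp.
have [v [kvk vkv pv vfp]] :=
  regular_corner_inverse vnr fpfp pp intertwiner_fixed_left kp.
exact: corner_inner_of_inverse kvk vkv pv vfp.
Qed.

End CornerIntertwiner.

Theorem proposition2p6 (R : pzRingType) (f : {rmorphism R -> R}) :
  semiprime R -> automorphism f ->
  (* (a) *)
  (commutative_ring R ->
     (X_inner f <-> nonzero_set (ann (fun s => exists r, s = r - f r))) /\
     (nonzero_set (ann (fun s => exists r, s = r - f r)) <->
        exists I : R -> Prop,
          [/\ is_ideal I, nonzero_set I & forall x, I x -> f x = x])) /\
  (* (b) *)
  (commutative_ring R -> von_neumann_regular R ->
     (X_inner f <->
        (exists e : R, [/\ e * e = e, e != 0 & forall r, f (e * r) = e * r]))) /\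
  (* (c) *)
  (von_neumann_regular R -> X_inner f -> corner_inner f).
Proof.
move=> sp f_aut; split; [move=> R_comm | split].
- split; first exact: X_inner_ann_im_idB.
  split=> [[a ha a_neq0] | [I [[_ _ _ mulI_l _] [a Ia a_neq0] fixedI]]].
    exists (ann (im_idB f)); split; first exact: ann_is_ideal.
      by exists a.
    by move=> x; exact: ann_im_idB_fixed.
  by exists a => //; apply: fixed_ideal_ann => r; apply/fixedI/mulI_l.
- by move=> R_comm; exact: X_inner_fixed_idempotent.
- move=> vnr /(X_inner_corner_intertwiner f_aut vnr) [p [k [pp k_neq0 kp fk]]].
  exact: corner_inner_of_intertwiner f_aut pp k_neq0 kp fk vnr.
Qed.
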